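(* There exists an almost discrete Fréchet–Urysohn (Tychonoff) space $Z$ such that $Z\times Z$ is not a weakly Grothendieck space.
   Context: A space is almost discrete if it has exactly one non-isolated point. $C_p(X)$ is the space of continuous real-valued functions on $X$ with the pointwise convergence topology. A space $W$ is a $g$-space if every subset $A\subseteq W$ such that every infinite subset of $A$ has an accumulation point in $W$ has compact closure in $W$; $X$ is weakly Grothendieck if $C_p(X)$ is a $g$-space. *)

From HB Require Import structures.
From mathcomp Require Import all_boot all_order all_algebra.
From mathcomp Require Import all_classical all_reals all_analysis.

Set Implicit Arguments.
Unset Strict Implicit.
Unset Printing Implicit Defensive.
Import Order.TTheory GRing.Theory Num.Theory.
Import numFieldNormedType.Exports.
Local Open Scope classical_set_scope.
Local Open Scope ring_scope.

(* Tychonoff space: completely regular and T1 (equivalently, given complete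
   regularity, Hausdorff). *)
Definition tychonoff_space (T : topologicalType) : Prop :=
  completely_regular_space T /\ hausdorff_space T.

Definition almost_discrete (T : topologicalType) : Prop :=
  exists! z : T, ~ isolated [set: T] z.

Definition frechet_urysohn (T : topologicalType) : Prop :=
  forall (A : set T) (x : T), closure A x ->
    exists u : nat -> T, (forall n, A (u n)) /\ u @ \oo --> x.

Definition g_space (W : topologicalType) : Prop :=
  forall A : set W,
    (forall B : set W, B `<=` A -> infinite_set B ->
       exists x : W, limit_point B x) ->
    compact (closure A).

Definition Cp (R : realType) (X : topologicalType) : topologicalType :=
  set_type [set f : {ptws X -> R} | continuous (f : X -> R)].

Definition weakly_grothendieck (R : realType) (X : topologicalType) : Prop :=
  g_space (Cp R X).

From HB Require Import structures.
From mathcomp Require Import all_boot all_order all_algebra.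
From mathcomp Require Import all_classical all_reals all_analysis.

(* Z is the fan with one spine for every s : nat -> nat: the points (s, m) are
   isolated and a neighbourhood of the apex must contain a tail
   {(s, m) | m >= h s} of every spine.  In Z * Z the set
   W = {((cst k, f k), (f, k))} accumulates at (apex, apex), but a diagonal
   argument shows that for any countably many spines f_n the part of W whose
   second spine is some f_n is closed and discrete.  Hence every pointwise
   cluster point of countably many indicators of finite subsets of W is
   continuous, so infinite sets of such indicators have accumulation points in
   C_p(Z * Z); yet along the directed set of all finite subsets of W these
   indicators cluster only at the indicator of W, which is discontinuous. *)

Set Implicit Arguments.
Unset Strict Implicit.
Unset Printing Implicit Defensive.
Import GRing.Theory.
Import numFieldNormedType.Exports.
Local Open Scope classical_set_scope.
Local Open Scope ring_scope.

Lemma continuous_const_off {T U : topologicalType} (S : set T) (c : U)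
    (g : T -> U) :
  (forall x, ~ S x -> g x = c) ->
  (forall x : T, nbhs x [set x] \/ nbhs x (~` S)) -> continuous g.
Proof.
move=> gS isoS x V /nbhs_singleton Vgx.
have [xiso|xnS] := isoS x; first by apply: filterS xiso => _ ->.
have gxc := gS x (nbhs_singleton xnS).
by apply: filterS xnS => y /gS gyc /=; rewrite gyc -gxc.
Qed.

Lemma cluster_preimage_set1 {T U : topologicalType} (F : set_system T)
    (f : T -> U) (c : U) (x : T) :
  accessible_space U -> {for x, continuous f} ->
  F (f @^-1` [set c]) -> cluster F x -> f x = c.
Proof.
move=> U1 fx Fc Fx; apply: contrapT => /eqP fxc.
have : nbhs (f x) (~` [set c]).
  apply: open_nbhs_nbhs; split; last by move=> /= fxE; rewrite fxE eqxx in fxc.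
  exact/closed_openC/accessible_closed_set1.
by move=> /fx /(Fx _ _ Fc) [y [/= -> ]].
Qed.

Lemma injective_seq_of_infinite {T : choiceType} (B : set T) :
  infinite_set B -> exists2 u : nat -> T, injective u & forall n, B (u n).
Proof.
move=> /infiniteP /card_leP [f].
have nT n : n \in [set: nat] by rewrite inE.
exists (fun n => \val (f (exist _ n (nT n))))
  => [n m /val_inj /(@inj _ _ _ f)|n].
  by move=> /(_ (mem_set I) (mem_set I)) /(congr1 \val).
exact: set_mem (valP (f (exist _ n (nT n)))).
Qed.

Lemma cluster_injective_limit_point {T : topologicalType} (B : set T)
    (u : nat -> T) (x : T) :
  injective u -> (forall n, B (u n)) -> cluster (u @ \oo) x ->
  limit_point B x.
Proof.
move=> uinj uB ux U Ux.
have : (u @ \oo) [set u n | n in [set n | u n != x]].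
  have [[n0 un0]|nox] := pselect (exists n, u n = x).
    exists n0.+1 => // n /= n0n; exists n => //; apply/eqP => unx.
    by move: n0n; rewrite (uinj _ _ (etrans unx (esym un0))) ltnn.
  exists 0%N => // n _; exists n => //.
  by apply/eqP => unx; apply: nox; exists n.
by move=> /(ux _ _)/(_ Ux) [_ [[n unx <-] Uun]]; exists (u n).
Qed.

Lemma cluster_set_val {T : topologicalType} (A : set T)
    (F : set_system (set_type A)) (x : set_type A) : Filter F ->
  cluster (set_val @ F) (set_val x) -> cluster F x.
Proof.
move=> FF Fx P Q FP [_ [ [V oV <-] Vx] VQ].
have FP' : (set_val @ F) (set_val @` P).
  exact: filterS (@preimage_image _ _ _ _) FP.
have [_ [ [a Pa <-] Va]] := Fx _ _ FP' (open_nbhs_nbhs (conj oV Vx)).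
by exists a; split; last exact: VQ.
Qed.

Lemma cluster_indic_seq (R : realType) (T : eqType) (S : set T)
    (A : nat -> set T) :
  (forall n, A n `<=` S) ->
  exists g : {ptws T -> R},
    cluster ((fun n => \1_(A n) : {ptws T -> R}) @ \oo) g /\
    forall x, ~ S x -> g x = 0.
Proof.
move=> AS.
pose K x : set R := if `[< S x >] then [set 0; 1] else [set 0].
have Kc x : compact (K x).
  by rewrite /K; case: ifP => _; [apply: compactU|]; exact: compact_set1.
have FK : ((fun n => \1_(A n) : {ptws T -> R}) @ \oo)
    [set g : {ptws T -> R} | forall x, K x (g x)].
  exists 0%N => // n _ x; rewrite /= indicE /K.
  have [xA|xA] := boolP (x \in A n); last by case: ifP => _ /=; [left|].
  by rewrite asboolT /=; [right|exact: AS (set_mem xA)].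
have [g [Kg ug]] := tychonoff Kc _ FK.
by exists g; split => // x nSx; have := Kg x; rewrite /K asboolF.
Qed.

Lemma seq_family_range (T : pointedType) (U : Type) (u0 : U) (f : T -> U)
    (l : nat -> seq T) :
  exists G : nat -> U, forall n x, x \in l n -> range G (f x).
Proof.
exists (fun p => if unpickle p is Some (n, j) then f (nth point (l n) j)
                 else u0).
move=> n x xl; exists (pickle (n, index x (l n))) => //=.
by rewrite pickleK nth_index.
Qed.

(* The apex is [None]; [Some (s, m)] is the [m]-th point of the spine [s]. *)
Definition fan := option ((nat -> nat) * nat).
HB.instance Definition _ := Pointed.on fan.

Notation apex := (None : fan).

Definition fan_tail (h : (nat -> nat) -> nat) : set fan :=
  [set y | forall s m, y = Some (s, m) -> (h s <= m)%N].

Definition fan_open (U : set fan) := U apex -> exists h, fan_tail h `<=` U.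

Lemma fan_openT : fan_open setT.
Proof. by move=> _; exists (fun=> 0%N). Qed.

Lemma fan_openI : setI_closed fan_open.
Proof.
move=> U V oU oV [/oU [h1 hU] /oV [h2 hV]].
exists (fun s => maxn (h1 s) (h2 s)) => y y_tail.
split; [apply: hU|apply: hV] => s m ysm; have := y_tail s m ysm;
  by rewrite geq_max => /andP[].
Qed.

Lemma fan_open_bigU (I : Type) (U : I -> set fan) :
  (forall i, fan_open (U i)) -> fan_open (\bigcup_i U i).
Proof.
move=> oU [i _ /oU [h hU]]; exists h => y /hU Uy; by exists i.
Qed.

HB.instance Definition _ :=
  isOpenTopological.Build fan fan_openT fan_openI fan_open_bigU.

Lemma open_fan_tail h : open (fan_tail h).
Proof. by move=> _; exists h. Qed.

Lemma nbhs_fan_tail h : nbhs apex (fan_tail h).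
Proof. by apply: open_nbhs_nbhs; split; [exact: open_fan_tail|]. Qed.

Lemma nbhs_apexP (V : set fan) : nbhs apex V <-> exists h, fan_tail h `<=` V.
Proof.
split=> [[B [oB /oB [h hB] BV]]|[h hV]].
  by exists h; exact: subset_trans BV.
exact: filterS hV (nbhs_fan_tail h).
Qed.

Lemma open_apex_free (U : set fan) : ~ U apex -> open U.
Proof. by move=> nU; change (fan_open U) => /nU. Qed.

Lemma nbhs_fan_point d : nbhs (Some d : fan) [set Some d].
Proof. by apply: open_nbhs_nbhs; split => //; exact: open_apex_free. Qed.

Lemma nbhs_apex_fan_pointC d : nbhs apex (~` [set Some d] : set fan).
Proof.
case: d => s m0; apply/nbhs_apexP; exists (fun=> m0.+1) => y y_tail ysm0.
by have := y_tail s m0 ysm0; rewrite ltnn.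
Qed.

Lemma closure_fan (A : set fan) : closure A `<=` A `|` [set apex].
Proof.
move=> [d|] clA; last by right.
by have [y [Ay <-]] := clA _ (nbhs_fan_point d); left.
Qed.

Lemma fan_hausdorff : hausdorff_space fan.
Proof.
have apex_sep d : ~ cluster (nbhs (Some d : fan)) apex.
  by move=> /(_ _ _ (nbhs_fan_point d) (nbhs_apex_fan_pointC d)) [y [yd]].
move=> [p|] [q|] // pq.
- by have [y [<- ->]] := pq _ _ (nbhs_fan_point p) (nbhs_fan_point q).
- by case: (apex_sep p).
- case: (apex_sep q) => A B nA nB.
  by have [y [? ?]] := pq _ _ nB nA; exists y.
Qed.

Lemma fan_normal : normal_space fan.
Proof.
move=> A clA U AU.
have [Aapex|nAapex] := pselect (A apex).
  exists U => // x /closure_fan [//|->]; exact: nbhs_singleton (AU _ Aapex).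
exists A; last by move=> x /clA Ax; exact: nbhs_singleton (AU _ Ax).
move=> [d|] Ad //; by apply: filterS (nbhs_fan_point d) => _ ->.
Qed.

Lemma fan_isolated d : isolated [set: fan] (Some d).
Proof.
split; first by rewrite inE.
by exists [set Some d]; [exact: nbhs_fan_point|rewrite setIT].
Qed.

Lemma apex_not_isolated : ~ isolated [set: fan] apex.
Proof.
move=> [_ [V /nbhs_apexP [h hV]]]; rewrite setIT => Vapex.
have /hV : fan_tail h (Some (fun=> 0%N, h (fun=> 0%N))) by move=> _ _ [<- <-].
by rewrite Vapex.
Qed.

Lemma fan_almost_discrete : almost_discrete fan.
Proof.
exists apex; split; first exact: apex_not_isolated.
by move=> [d|] // d_nonisolated; case: d_nonisolated; exact: fan_isolated.
Qed.

Lemma closure_apexP (A : set fan) : closure A apex -> ~ A apex ->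
  exists s, forall n, exists m, (n <= m)%N /\ A (Some (s, m)).
Proof.
move=> clA nAapex; apply: contrapT => no_spine.
have /choice [h hA] :
    forall s, exists n, forall m, (n <= m)%N -> ~ A (Some (s, m)).
  move=> s; apply: contrapT => spine_s; apply: no_spine; exists s => n.
  apply: contrapT => none_after_n; apply: spine_s; exists n => m nm Asm.
  by apply: none_after_n; exists m.
have [[[s m]|] [Ay y_tail]] := clA _ (nbhs_fan_tail h); last exact: nAapex.
exact: hA s m (y_tail s m erefl) Ay.
Qed.

Lemma fan_frechet_urysohn : frechet_urysohn fan.
Proof.
move=> A x clAx; have [Ax|nAx] := pselect (A x).
  by exists (fun=> x); split => //; exact: cvg_cst.
case: x clAx nAx => [d /closure_fan [Ad /(_ Ad)|//]|clA nAapex] //.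
have [s /choice [g gA]] := closure_apexP clA nAapex.
exists (fun n => Some (s, g n)); split => [n|]; first by case: (gA n).
move=> V /nbhs_apexP [h hV]; exists (h s) => // n /= hn.
by apply: hV => _ _ [<- <-]; exact: leq_trans hn (gA n).1.
Qed.

Notation fan2 := (fan * fan)%type.

Definition wpoint (f : nat -> nat) (k : nat) : fan2 :=
  (Some (cst k, f k), Some (f, k)).

Definition W : set fan2 := [set x | exists f k, x = wpoint f k].

Definition snd_spine (x : fan2) : nat -> nat :=
  if x.2 is Some (f, _) then f else cst 0%N.

Definition W_along (G : nat -> nat -> nat) : set fan2 :=
  W `&` snd_spine @^-1` range G.

Lemma diagonal_tails (G : nat -> nat -> nat) :
  exists h1 h2 : (nat -> nat) -> nat,
    forall n k, (h2 (G n) <= k)%N -> (G n k < h1 (cst k))%N.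
Proof.
have /choice [idx idxP] : forall f, exists p, range G f -> G p = f.
  move=> f; have [[n _ <-]|nGf] := pselect (range G f); first by exists n.
  by exists 0%N.
exists (fun s => (\max_(i < (s 0%N).+1) G i (s 0%N)).+1), idx => n k idxk.
rewrite ltnS /= -(idxP (G n)); last exact: imageT.
have idx_ord : (idx (G n) < k.+1)%N by [].
by have := @leq_bigmax _ (fun i : 'I_k.+1 => G i k) (Ordinal idx_ord).
Qed.

Lemma nbhs_fan2 (P Q : set fan) (x : fan2) :
  nbhs x.1 P -> nbhs x.2 Q -> nbhs x (P `*` Q).
Proof. by move=> nP nQ; exists (P, Q). Qed.

Lemma nbhs_apex2_notW_along G : nbhs (apex, apex) (~` W_along G).
Proof.
have [h1 [h2 hG]] := diagonal_tails G.
apply: filterS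
  (nbhs_fan2 (x := (apex, apex)) (nbhs_fan_tail h1) (nbhs_fan_tail h2)).
move=> x [tail1 tail2] [[f [k xE]] [n _ Gnf]].
move: tail1 tail2 Gnf; rewrite xE /= => tail1 tail2 Gnf.
have := hG n k; rewrite Gnf (tail2 _ _ erefl) => /(_ isT).
by rewrite ltnNge (tail1 _ _ erefl).
Qed.

Lemma isolated_or_notW (x : fan2) : x != (apex, apex) ->
  nbhs x [set x] \/ nbhs x (~` W).
Proof.
case: x => [[a|] [b|]] // _.
- left; apply: filterS (nbhs_fan2 (x := (Some a, Some b))
    (nbhs_fan_point a) (nbhs_fan_point b)).
  by move=> [y1 y2] [/= -> ->].
- right; case: a => s m.
  apply: filterS (nbhs_fan2 (x := (Some (s, m), apex)) (nbhs_fan_point (s, m))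
    (nbhs_fan_tail (fun=> (s 0%N).+1))).
  move=> [y1 y2] [/= -> tail2] [f [k [s_k _ y2E]]].
  by have := tail2 _ _ y2E; rewrite s_k ltnn.
- right; case: b => t j.
  apply: filterS (nbhs_fan2 (x := (apex, Some (t, j)))
    (nbhs_fan_tail (fun=> (t j).+1)) (nbhs_fan_point (t, j))).
  move=> [y1 y2] [/= tail1 ->] [f [k [y1E t_f j_k]]].
  by have := tail1 _ _ y1E; rewrite t_f j_k ltnn.
Qed.

Lemma isolated_or_notW_along G (x : fan2) :
  nbhs x [set x] \/ nbhs x (~` W_along G).
Proof.
have [->|x_apex2] := eqVneq x (apex, apex).
  by right; exact: nbhs_apex2_notW_along.
case: (isolated_or_notW x_apex2) => [|nW]; [left|right] => //.
by apply: filterS nW => y nWy [].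
Qed.

Lemma closure_W_apex2 : closure W (apex, apex).
Proof.
move=> N [[P Q] [/= /nbhs_apexP [h1 hP] /nbhs_apexP [h2 hQ]] PQN].
pose f k := h1 (cst k); exists (wpoint f (h2 f)).
split; first by exists f, (h2 f).
by apply: PQN; split; [apply: hP|apply: hQ] => _ _ [<- <-].
Qed.

Section Cp_fan2.
Variable R : realType.
Local Notation C := (Cp R fan2).

Lemma continuous_vanishing_off_W_along G (g : fan2 -> R) :
  (forall x, ~ W_along G x -> g x = 0) -> continuous g.
Proof.
by move=> gG; apply: continuous_const_off gG _; exact: isolated_or_notW_along.
Qed.

Lemma indic_W_discontinuous : ~ continuous (\1_W : fan2 -> R).
Proof.
move=> /(_ (apex, apex)) cW.
have : \1_W (apex, apex) = 1 :> R.
  apply: (@cluster_preimage_set1 _ _ (globally W)) cW _ _.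
  - exact/hausdorff_accessible/Rhausdorff.
  - by move=> x Wx; rewrite /= indicE mem_set.
  - move=> A B WA /closure_W_apex2 [x [Wx Bx]].
    by exists x; split => //; exact: WA.
have nW : ~ W (apex, apex) by case=> f [k []].
by rewrite indicE memNset // => /esym/eqP; rewrite oner_eq0.
Qed.

Definition Cp_of (g : fan2 -> R) (gc : continuous g) : C :=
  exist _ (g : {ptws fan2 -> R}) (mem_set gc).

Lemma continuous_Cp_eval (x : fan2) :
  continuous (fun f : C => (\val f : fan2 -> R) x).
Proof.
move=> f; apply: continuous_comp (@proj_continuous fan2 (fun=> R) x (\val f)).
exact: (@initial_continuous _ _ set_val).
Qed.

Definition fin_indics : set C :=
  [set f | exists2 l : seq fan2,
    [set` l] `<=` W & \val f = \1_[set` l] :> (fan2 -> R)].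

Lemma fin_indics_limit_point (B : set C) :
  B `<=` fin_indics -> infinite_set B -> exists g, limit_point B g.
Proof.
move=> BA /injective_seq_of_infinite [u uinj uB].
have /choice [l lP] : forall n, exists l : seq fan2,
    [set` l] `<=` W /\ \val (u n) = \1_[set` l] :> (fan2 -> R).
  by move=> n; have [l] := BA _ (uB n); exists l.
have [G GP] := seq_family_range (cst 0%N) snd_spine l.
have l_along n : [set` l n] `<=` W_along G.
  by move=> x xl; split; [exact: (lP n).1|exact: GP n x xl].
have [g [ug gG]] := @cluster_indic_seq R _ _ _ l_along.
have gc := continuous_vanishing_off_W_along gG.
exists (Cp_of gc); apply: cluster_injective_limit_point uinj uB _.
have ul : set_val \o u = (fun n => \1_[set` l n] : {ptws fan2 -> R}).
  by apply/funext => n; rewrite /= -(lP n).2.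
by apply: cluster_set_val; move: ug; rewrite -ul.
Qed.

Lemma indic_fin_W_continuous (L : seq fan2) :
  [set` L] `<=` W -> continuous (\1_[set` L] : fan2 -> R).
Proof.
move=> LW; have [G GP] := seq_family_range (cst 0%N) snd_spine (fun=> L).
apply: (@continuous_vanishing_off_W_along G) => x nWx.
rewrite indicE memNset // => xL; apply: nWx.
by split; [exact: LW|exact: GP 0%N x xL].
Qed.

Definition fin_indics_above (L : seq fan2) : set C :=
  fin_indics `&` [set f | forall x, x \in L -> (\val f : fan2 -> R) x = 1].

Definition fin_indics_filter : set_system C :=
  filter_from [set L : seq fan2 | [set` L] `<=` W] fin_indics_above.

Lemma fin_indics_filter_proper : ProperFilter fin_indics_filter.
Proof.
apply: filter_from_proper.
  apply: filter_from_filter; first by exists [::].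
  move=> L1 L2 L1W L2W; exists (L1 ++ L2).
    by move=> x /=; rewrite mem_cat => /orP[/L1W|/L2W].
  move=> f [Af f1]; split; split => // x xL; apply: f1.
    by rewrite mem_cat xL.
  by rewrite mem_cat xL orbT.
move=> L LW; exists (Cp_of (indic_fin_W_continuous LW)).
split; first by exists L.
by move=> x xL; rewrite /= indicE mem_set.
Qed.

Lemma cluster_fin_indics_filter (g : C) : cluster fin_indics_filter g ->
  \val g = \1_W :> (fan2 -> R).
Proof.
move=> Fg; apply/funext => x.
apply: (cluster_preimage_set1 _ (@continuous_Cp_eval x g) _ Fg).
  exact/hausdorff_accessible/Rhausdorff.
have [Wx|nWx] := pselect (W x).
  exists [:: x]; first by move=> y /=; rewrite inE => /eqP ->.
  by move=> f [_ f1]; rewrite /= f1 ?mem_head // indicE mem_set.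
exists [::] => // f [[l lW fl] _]; rewrite /= fl !indicE !memNset // => xl.
by apply: nWx; exact: lW.
Qed.

Lemma Cp_fan2_not_g_space : ~ g_space C.
Proof.
move=> gC; have /(_ _ fin_indics_filter_proper) := gC _ fin_indics_limit_point.
case=> [|g [_ /cluster_fin_indics_filter gW]].
  by exists [::] => // f [Af _]; exact: subset_closure.
by apply: indic_W_discontinuous; rewrite -gW; exact: set_mem (valP g).
Qed.

End Cp_fan2.

Theorem mainTheorem7 (R : realType) :
  exists Z : topologicalType,
    [/\ tychonoff_space Z, almost_discrete Z, frechet_urysohn Z &
        ~ weakly_grothendieck R (Z * Z)%type].
Proof.
exists fan; split.
- split; last exact: fan_hausdorff.
  have fan_accessible := hausdorff_accessible fan_hausdorff.
  exact: normal_completely_regular fan_normal fan_accessible.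
- exact: fan_almost_discrete.
- exact: fan_frechet_urysohn.
- exact: Cp_fan2_not_g_space.
Qed.
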